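(* For every $n\ge 1$, the number $b_n$ of distinct complete lines of play of Planted Brussels Sprouts whose initial state has $n$ arms is $b_n=n^{n-2}$.
   Context: Planted Brussels Sprouts of order $n$: start with a closed disk with $n$ marked points on its boundary circle, labeled $1,\dots,n$ in clockwise order. Attached to each marked point is an arm, a short segment pointing into the interior of the disk; these arms are free. A move consists of two steps. First, choose two free arms and join their free ends by a simple curve (an arc) in the disk that does not intersect any previously drawn arc or arm; the two joined arms cease to be free. Second, mark a point (a notch) on the arc, from which two new free arms emanate, one on each side of the arc. The game ends when no move is possible. A (complete) line of play is the sequence of moves from the initial state to the end of the game. Long labels: the original arm at point $i$ has long label $i$. If an arc joins arms with long labels $\alpha$ and $\beta$, the two new arms receive long labels $(\alpha,\beta)$ and $(\beta,\alpha)$, placed so that, going clockwise around the notch, one sees the old arm $\alpha$, the new arm $(\alpha,\beta)$, the old arm $\beta$, and the new arm $(\beta,\alpha)$. Two lines of play are considered the same iff for every $k$ the two arms joined at the $k$-th move have the same long labels in both. Otherwise they are distinct. *)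

From HB Require Import structures.
From mathcomp Require Import all_boot.
From mathcomp Require Import finmap.

Set Implicit Arguments.
Unset Strict Implicit.
Unset Printing Implicit Defensive.

(* Long labels: [Arm i] is the original arm at marked point i; joining arms
   with long labels a and b creates arms [New a b] = (a,b) and [New b a] = (b,a). *)
Inductive label : Type :=
  | Arm of nat
  | New of label & label.

Fixpoint label_enc (l : label) : GenTree.tree nat :=
  match l with
  | Arm i => GenTree.Leaf i
  | New a b => GenTree.Node 0 [:: label_enc a; label_enc b]
  end.

Fixpoint label_dec (t : GenTree.tree nat) : option label :=
  match t with
  | GenTree.Leaf i => Some (Arm i)
  | GenTree.Node _ [:: ta; tb] =>
      match label_dec ta, label_dec tb with
      | Some a, Some b => Some (New a b)
      | _, _ => None
      end
  | GenTree.Node _ _ => None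
  end.

Lemma label_encK : pcancel label_enc label_dec.
Proof. by elim=> [i|a IHa b IHb] //=; rewrite IHa IHb. Qed.

HB.instance Definition _ := Countable.copy label (pcan_type label_encK).

(* A state of the game: the list of regions (faces) of the disk; each region
   is recorded by the cyclic (clockwise) sequence of the free arms lying in
   it.  Each region is a topological disk, so any two free arms of a region
   can be joined, and the arc is unique up to isotopy. *)
Definition state := seq (seq label).

Definition init_state (n : nat) : state := [:: [seq Arm i | i <- iota 1 n]].

(* If the region reads (cyclically, clockwise) a, X, b, Y, the
   arc a--b splits it into the region with cyclic arm sequence (a,b), X and
   the region with cyclic arm sequence (b,a), Y (orientation convention of
   the long labels: clockwise around the notch a, (a,b), b, (b,a)). *)
Definition step (st : state) (m : {fset label}) (st' : state) : Prop :=
  exists (pre post : state) (r : seq label) (a b : label) (X Y : seq label) (k : nat),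
    [/\ st = pre ++ r :: post,
        rot k r = a :: X ++ b :: Y,
        a != b,
        m = [fset a; b]%fset &
        st' = pre ++ [:: New a b :: X; New b a :: Y] ++ post].

Definition terminal (st : state) : Prop :=
  forall m st', ~ step st m st'.

Fixpoint line_from (st : state) (l : seq {fset label}) : Prop :=
  match l with
  | [::] => terminal st
  | m :: l' => exists st', step st m st' /\ line_from st' l'
  end.

Definition complete_line (n : nat) (l : seq {fset label}) : Prop :=
  line_from (init_state n) l.

From HB Require Import structures.
From mathcomp Require Import all_boot all_algebra finmap.
From mathcomp Require Import zify ring.

Set Implicit Arguments.
Unset Strict Implicit.
Unset Printing Implicit Defensive.

Import GRing.Theory Num.Theory.

(* A move splits a region of the disk with k free arms into two regions with
   d and k - d free arms, where d is the distance between the joined arms, so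
   every line of play from a state has exactly mu = sum_regions (k - 1) moves.
   The long labels of the free arms are pairwise distinct, and none is a
   subterm of another, so a move is determined by the labels of the two arms
   it joins.  By induction on mu, the number of lines of play from a state is
   mu! * prod_regions w(k) with w(k) = k^(k-1)/k!: since k - d pairs of arms
   of a k-region lie at distance d, the induction step is the identity
   sum_(1 <= d < k) (k - d) w(d) w(k - d) = (k - 1) w(k), a form of Abel's
   identity.  For the initial disk this gives (n-1)! n^(n-1)/n! = n^(n-2). *)

Lemma rot_index_head (T : eqType) (s : seq T) k x t :
  uniq s -> rot k s = x :: t -> rot (index x s) s = x :: t.
Proof.
move=> uniq_s rot_s; have [lt_ks|le_sk] := ltnP k (size s); last first.
  by move: rot_s; rewrite rot_oversize // => ->; rewrite /= eqxx rot0.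
suff -> : index x s = k by [].
have <- : nth x s k = x by move: rot_s; rewrite /rot (drop_nth x lt_ks) => -[].
exact: index_uniq.
Qed.

Lemma uniq_cat_cons_inj (T : eqType) (x : T) s1 s2 t1 t2 :
  uniq (s1 ++ x :: t1) -> s1 ++ x :: t1 = s2 ++ x :: t2 -> s1 = s2 /\ t1 = t2.
Proof.
have notin_prefix s t : uniq (s ++ x :: t) -> x \notin s.
  by rewrite cat_uniq => /and3P[_ /hasPn/(_ x (mem_head _ _))].
move=> uniq_s1 eq_s; have uniq_s2 := uniq_s1; rewrite eq_s in uniq_s2.
have eq_size : size s1 = size s2.
  have := congr1 (index x) eq_s.
  rewrite !index_cat (negbTE (notin_prefix _ _ uniq_s1)).
  by rewrite (negbTE (notin_prefix _ _ uniq_s2)) /= eqxx !addn0.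
by move/eqP: eq_s; rewrite eqseq_cat // => /andP[/eqP-> /eqP[->]].
Qed.

Lemma allpairs_cons_uniq (T U : eqType) (s : seq (T * U)) (t : U -> seq (seq T)) :
  uniq (map fst s) -> {in s, forall p, uniq (t p.2)} ->
  uniq [seq p.1 :: l | p <- s, l <- t p.2].
Proof.
elim: s => [//|p s IHs] /= /andP[p_s uniq_s] uniq_t.
rewrite cat_uniq map_inj_uniq ?uniq_t ?mem_head //=; last by move=> ? ? [].
rewrite IHs ?andbT //; last by move=> q q_s; apply: uniq_t; rewrite inE q_s orbT.
apply/hasPn => _ /allpairsPdep[q [l [q_s _ ->]]]; apply/mapP => -[l' _ [eq_fst _]].
by move: p_s; rewrite -eq_fst map_f.
Qed.

(** * Long labels *)

Fixpoint subterm (u v : label) : bool :=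
  if v is New a b then [|| u == a, u == b, subterm u a | subterm u b] else false.

Fixpoint label_size (l : label) : nat :=
  if l is New a b then (label_size a + label_size b).+1 else 1.

Lemma subterm_size u v : subterm u v -> label_size u < label_size v.
Proof. by elim: v => [//|a IHa b IHb] /= /or4P[/eqP->|/eqP->|/IHa|/IHb]; lia. Qed.

Lemma subterm_trans v u w : subterm u v -> subterm v w -> subterm u w.
Proof.
move=> uv; elim: w => [//|a IHa b IHb] /= /or4P[/eqP<-|/eqP<-|/IHa->|/IHb->];
  by rewrite ?uv ?orbT.
Qed.

Lemma subterm_New_l a b : subterm a (New a b).
Proof. by rewrite /= eqxx. Qed.

(* The antichain condition is what keeps the labels created by a move fresh. *)
Definition wf_arms (s : seq label) : Prop :=
  uniq s /\ {in s &, forall u v, ~~ subterm u v}.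

Lemma wf_arms_perm s t : perm_eq s t -> wf_arms s -> wf_arms t.
Proof.
move=> eq_st [uniq_s anti_s]; split; first by rewrite -(perm_uniq eq_st).
by move=> u v; rewrite -!(perm_mem eq_st); apply: anti_s.
Qed.

Lemma wf_arms_join a b R :
  a != b -> wf_arms [:: a, b & R] -> wf_arms [:: New a b, New b a & R].
Proof.
move=> neq_ab [uniq_abR anti_abR].
have old_ab p : p \in [:: a; b] -> p \in [:: a, b & R] /\ p \notin R.
  move: uniq_abR => /= /andP[]; rewrite inE negb_or => /andP[_ aR] /andP[bR _].
  by rewrite !inE => /orP[]/eqP->; rewrite ?eqxx ?orbT.
have old_R w : w \in R -> w \in [:: a, b & R] by rewrite !inE => ->; rewrite !orbT.
have new_R p q w : p \in [:: a; b] -> q \in [:: a; b] -> w \in R ->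
    ~~ subterm (New p q) w && ~~ subterm w (New p q).
  move=> /old_ab[abp pR] /old_ab[abq qR] wR; have abw := old_R w wR.
  rewrite /= !negb_or (anti_abR _ _ abw abp) (anti_abR _ _ abw abq) !andbT.
  apply/and3P; split; [|by apply: contraNneq pR => <-|by apply: contraNneq qR => <-].
  by apply: contraNN (anti_abR _ _ abp abw); apply: subterm_trans (subterm_New_l p q).
have new_new u v : u \in [:: New a b; New b a] -> v \in [:: New a b; New b a] ->
    ~~ subterm u v.
  by rewrite !inE => /orP[]/eqP-> /orP[]/eqP->; apply/negP => /subterm_size /=; lia.
have [in_a in_b] : a \in [:: a; b] /\ b \in [:: a; b] by rewrite !inE !eqxx orbT.
have new_notin_R p q : p \in [:: a; b] -> New p q \notin R.
  move=> /old_ab[abp _]; apply/negP => /old_R abpq.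
  by have := anti_abR _ _ abp abpq; rewrite subterm_New_l.
split.
  move: uniq_abR => /= /and3P[_ _ ->]; rewrite inE negb_or !new_notin_R // !andbT.
  by apply: contra neq_ab => /eqP[->].
move=> u v; rewrite -[[:: _, _ & R]]/([:: New a b; New b a] ++ R) !mem_cat.
move=> /orP[uN|uR] /orP[vN|vR]; first exact: new_new.
- by move: uN; rewrite !inE => /orP[]/eqP->;
    [case/andP: (new_R _ _ _ in_a in_b vR) | case/andP: (new_R _ _ _ in_b in_a vR)].
- by move: vN; rewrite !inE => /orP[]/eqP->;
    [case/andP: (new_R _ _ _ in_a in_b uR) | case/andP: (new_R _ _ _ in_b in_a uR)].
- exact: anti_abR (old_R _ uR) (old_R _ vR).
Qed.

(** * Moves *)

Lemma step_flatten pre post r a b X Y k : rot k r = a :: X ++ b :: Y ->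
  let rest := flatten pre ++ X ++ Y ++ flatten post in
  perm_eq (flatten (pre ++ r :: post)) [:: a, b & rest] /\
  perm_eq (flatten (pre ++ [:: New a b :: X; New b a :: Y] ++ post))
          [:: New a b, New b a & rest].
Proof.
move=> rot_r rest; have /permP count_r : perm_eq (rot k r) r by rewrite perm_rot.
rewrite rot_r in count_r.
have flatten_cons (s : seq label) ss : flatten (s :: ss) = s ++ flatten ss by [].
rewrite /rest; split; apply/permP => p;
  rewrite !flatten_cat !flatten_cons ?cats0 ?flatten_cons !count_cat -?count_r /=
    ?count_cat /=; lia.
Qed.

Lemma step_wf st m st' :
  step st m st' -> wf_arms (flatten st) -> wf_arms (flatten st').
Proof.
case=> pre [post [r [a [b [X [Y [k [-> rot_r neq_ab _ ->]]]]]]]].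
have [perm_st perm_st'] := step_flatten pre post rot_r.
rewrite perm_sym in perm_st' => /(wf_arms_perm perm_st)/(wf_arms_join neq_ab).
exact: wf_arms_perm.
Qed.

Definition remaining_moves (st : state) : nat := \sum_(r <- st) (size r).-1.

Lemma step_remaining_moves st m st' :
  step st m st' -> remaining_moves st = (remaining_moves st').+1.
Proof.
case=> pre [post [r [a [b [X [Y [k [-> rot_r _ _ ->]]]]]]]].
have size_r : size r = (size X + size Y).+2.
  by rewrite -(size_rot k) rot_r /= size_cat /= addnS.
rewrite /remaining_moves !big_cat !big_cons big_nil size_r /=; lia.
Qed.

Lemma step_perm st1 st2 m st1' : perm_eq st1 st2 -> step st1 m st1' ->
  exists2 st2', step st2 m st2' & perm_eq st1' st2'.
Proof.
move=> eq_st [pre [post [r [a [b [X [Y [k [E rot_r neq_ab def_m E']]]]]]]]].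
have r_st2 : r \in st2 by rewrite -(perm_mem eq_st) E mem_cat mem_head orbT.
move: eq_st; case/splitPr: r_st2 => pre2 post2 eq_st.
exists (pre2 ++ [:: New a b :: X; New b a :: Y] ++ post2).
  by exists pre2, post2, r, a, b, X, Y, k.
move: eq_st; rewrite {}E {}E' => /permP eq_st; apply/permP => p.
by move: (eq_st p); rewrite !count_cat /=; lia.
Qed.

Lemma line_from_perm l st1 st2 :
  perm_eq st1 st2 -> line_from st1 l -> line_from st2 l.
Proof.
elim: l st1 st2 => [|m l IHl] st1 st2 eq_st /=.
  move=> term1 m st' step2; rewrite perm_sym in eq_st.
  by have [st1' /term1] := step_perm eq_st step2.
case=> st1' [step1 line1]; have [st2' step2 eq_st'] := step_perm eq_st step1.
by exists st2'; split; last exact: IHl eq_st' line1.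
Qed.

Definition region_move (r : seq label) (i j : nat) : {fset label} * state :=
  let a := nth (Arm 0) r i in let b := nth (Arm 0) r j in
  ([fset a; b]%fset,
   [:: New a b :: take (j - i.+1) (drop i.+1 r); New b a :: drop j.+1 r ++ take i r]).

Definition region_moves (r : seq label) : seq ({fset label} * state) :=
  [seq region_move r i j | i <- index_iota 0 (size r), j <- index_iota i.+1 (size r)].

Lemma mem_region_moves r p :
  p \in region_moves r -> exists i j, i < j < size r /\ p = region_move r i j.
Proof.
case/allpairsPdep=> i [j [_ j_in ->]]; exists i, j; split => //.
by rewrite mem_index_iota in j_in.
Qed.

Lemma region_move_in r i j : i < j < size r -> region_move r i j \in region_moves r.
Proof.
case/andP=> lt_ij lt_jr.
by apply: allpairs_f_dep; rewrite mem_index_iota ?lt_ij ?(ltn_trans lt_ij).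
Qed.

Lemma region_moves_nil r : (region_moves r == [::]) = (size r <= 1).
Proof. by case: r => [|x [|y r]]. Qed.

Lemma rot_region_move r i j : i < j < size r ->
  rot i r = nth (Arm 0) r i :: take (j - i.+1) (drop i.+1 r)
            ++ nth (Arm 0) r j :: drop j.+1 r ++ take i r.
Proof.
case/andP=> lt_ij lt_jr; rewrite /rot (drop_nth (Arm 0) (ltn_trans lt_ij lt_jr)).
rewrite cat_cons -{1}(cat_take_drop (j - i.+1) (drop i.+1 r)) drop_drop subnK //.
by rewrite (drop_nth (Arm 0) lt_jr) -catA.
Qed.

Lemma region_move_step r post i j : uniq r -> i < j < size r ->
  step (r :: post) (region_move r i j).1 ((region_move r i j).2 ++ post).
Proof.
move=> uniq_r ij_r; exists [::], post, r; do 4 eexists; exists i.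
split; [by []|exact: rot_region_move ij_r| |by []|by []].
case/andP: ij_r => lt_ij lt_jr.
by rewrite nth_uniq ?(ltn_trans lt_ij) // neq_ltn lt_ij.
Qed.

Lemma region_move_rot r k a b X Y :
  uniq r -> rot k r = a :: X ++ b :: Y -> index a r < index b r ->
  region_move r (index a r) (index b r) = ([fset a; b]%fset, [:: New a b :: X; New b a :: Y]).
Proof.
move=> uniq_r rot_r lt_ab.
have a_r : a \in r by rewrite -(mem_rot k) rot_r mem_head.
have b_r : b \in r by rewrite -(mem_rot k) rot_r inE mem_cat mem_head !orbT.
have ab_r : index a r < index b r < size r by rewrite lt_ab index_mem.
have := rot_region_move ab_r; rewrite !nth_index // (rot_index_head uniq_r rot_r) => -[].
have : uniq (a :: X ++ b :: Y) by rewrite -rot_r rot_uniq.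
rewrite cons_uniq => /andP[_ uniq_XY] /(uniq_cat_cons_inj uniq_XY)[eX eY].
by rewrite /region_move !nth_index // -eX -eY.
Qed.

Lemma region_moves_complete r k a b X Y :
  uniq r -> rot k r = a :: X ++ b :: Y -> a != b ->
  exists2 s, ([fset a; b]%fset, s) \in region_moves r
           & perm_eq [:: New a b :: X; New b a :: Y] s.
Proof.
move=> uniq_r rot_r neq_ab.
have a_r : a \in r by rewrite -(mem_rot k) rot_r mem_head.
have b_r : b \in r by rewrite -(mem_rot k) rot_r inE mem_cat mem_head !orbT.
have [lt_ab|lt_ba|/(index_inj a a_r b_r) eq_ab] := ltngtP (index a r) (index b r).
- exists [:: New a b :: X; New b a :: Y] => //.
  by rewrite -(region_move_rot uniq_r rot_r lt_ab) region_move_in // lt_ab index_mem.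
- have rot_r' : rot (rot_add r k (size (a :: X))) r = b :: Y ++ a :: X.
    by rewrite -rot_rot_add rot_r -cat_cons rot_size_cat.
  exists [:: New b a :: Y; New a b :: X]; last by apply/permP => p /=; lia.
  by rewrite fsetUC -(region_move_rot uniq_r rot_r' lt_ba) region_move_in // lt_ba index_mem.
- by rewrite eq_ab eqxx in neq_ab.
Qed.

Lemma region_moves_fst r p : p \in region_moves r ->
  exists a b, [/\ a \in r, b \in r & p.1 = [fset a; b]%fset].
Proof.
case/mem_region_moves=> i [j [/andP[lt_ij lt_jr] ->]].
by exists (nth (Arm 0) r i), (nth (Arm 0) r j); rewrite !mem_nth ?(ltn_trans lt_ij).
Qed.

Lemma region_move_fst_inj r i j i' j' : uniq r ->
  i < j < size r -> i' < j' < size r ->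
  (region_move r i j).1 = (region_move r i' j').1 -> i = i' /\ j = j'.
Proof.
move=> uniq_r /andP[lt_ij lt_jr] /andP[lt_ij' lt_jr'] /= eq_fst.
have lt_ir := ltn_trans lt_ij lt_jr; have lt_ir' := ltn_trans lt_ij' lt_jr'.
have := fset21 (nth (Arm 0) r i) (nth (Arm 0) r j).
have := fset22 (nth (Arm 0) r i) (nth (Arm 0) r j).
by rewrite eq_fst !in_fset2 !nth_uniq //; lia.
Qed.

Lemma region_moves_fst_uniq r : uniq r -> uniq (map fst (region_moves r)).
Proof.
move=> uniq_r; rewrite /region_moves map_allpairs.
apply: allpairs_uniq_dep => [||[i j] [i' j']]; rewrite ?iota_uniq //.
  by move=> i _; apply: iota_uniq.
move=> /allpairsPdep[x [y [_ + [-> ->]]]] /allpairsPdep[x' [y' [_ + [-> ->]]]] /=.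
by rewrite !mem_index_iota => xy_r xy_r' /(region_move_fst_inj uniq_r xy_r xy_r')[-> ->].
Qed.

Fixpoint moves (st : state) : seq ({fset label} * state) :=
  if st is r :: st' then
    [seq (p.1, p.2 ++ st') | p <- region_moves r] ++ [seq (p.1, r :: p.2) | p <- moves st']
  else [::].

Lemma moves_step st p : uniq (flatten st) -> p \in moves st -> step st p.1 p.2.
Proof.
elim: st p => [//|r st IHst] p /=; rewrite cat_uniq => /and3P[uniq_r _ uniq_st].
rewrite mem_cat => /orP[] /mapP[q q_in ->] /=.
  by case/mem_region_moves: q_in => i [j [ij_r ->]]; apply: region_move_step.
have [pre [post [r' [a [b [X [Y [k [-> rot_r' neq_ab def_m ->]]]]]]]]] := IHst q uniq_st q_in.
by exists (r :: pre), post, r', a, b, X, Y, k.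
Qed.

Lemma step_moves st m st' : uniq (flatten st) -> step st m st' ->
  exists2 s, (m, s) \in moves st & perm_eq st' s.
Proof.
move=> + [pre [post [r [a [b [X [Y [k [def_st rot_r neq_ab -> ->]]]]]]]]].
rewrite {}def_st; elim: pre => [|r0 pre IHpre] /=;
  rewrite cat_uniq => /and3P[uniq_r0 _ uniq_rest]; last first.
  have [s s_in eq_s] := IHpre uniq_rest.
  exists (r0 :: s); last by rewrite perm_cons.
  by rewrite mem_cat; apply/orP; right; apply/mapP; exists ([fset a; b]%fset, s).
have [s s_in eq_s] := region_moves_complete uniq_r0 rot_r neq_ab.
exists (s ++ post); last by rewrite -(perm_cat2r post) in eq_s.
by rewrite mem_cat; apply/orP; left; apply/mapP; exists ([fset a; b]%fset, s).
Qed.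

Lemma moves_fst_sub st p : p \in moves st -> {subset p.1 <= flatten st}.
Proof.
elim: st p => [//|r st IHst] p /=.
rewrite mem_cat => /orP[] /mapP[q q_in ->] x /= x_q; rewrite mem_cat.
  by case/region_moves_fst: q_in x_q => a [b [a_r b_r ->]] /fset2P[]->; rewrite ?a_r ?b_r.
by rewrite (IHst q q_in x x_q) orbT.
Qed.

Lemma moves_fst_uniq st : uniq (flatten st) -> uniq (map fst (moves st)).
Proof.
elim: st => [//|r st IHst] /=; rewrite cat_uniq => /and3P[uniq_r disj_r_st uniq_st].
have map_fst (L : seq ({fset label} * state)) g :
    [seq p.1 | p <- [seq (p.1, g p) | p <- L]] = [seq p.1 | p <- L] by rewrite -map_comp.
rewrite map_cat !map_fst cat_uniq region_moves_fst_uniq // IHst // andbT.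
apply/hasPn => m /mapP[q q_in ->]; apply/mapP => -[p p_in eq_fst].
have [a [b [a_r _ def_p]]] := region_moves_fst p_in.
have /(moves_fst_sub q_in) a_st : a \in q.1 by rewrite eq_fst def_p fset21.
by move/hasPn: disj_r_st => /(_ a a_st); rewrite a_r.
Qed.

Lemma moves_nil st : (moves st == [::]) = (remaining_moves st == 0).
Proof.
elim: st => [|r st IHst] /=; first by rewrite /remaining_moves big_nil.
rewrite /remaining_moves big_cons -/(remaining_moves st) addn_eq0 -IHst.
by rewrite -subn1 subn_eq0 -region_moves_nil -!size_eq0 size_cat !size_map addn_eq0.
Qed.

Lemma moves_next st p : wf_arms (flatten st) -> p \in moves st ->
  wf_arms (flatten p.2) /\ remaining_moves st = (remaining_moves p.2).+1.
Proof.
move=> wf_st /(moves_step wf_st.1) step_p.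
by split; [exact: step_wf step_p wf_st | exact: step_remaining_moves step_p].
Qed.

(** * Lines of play *)

Fixpoint lines (n : nat) (st : state) : seq (seq {fset label}) :=
  if n is n'.+1 then [seq p.1 :: l | p <- moves st, l <- lines n' p.2] else [:: [::]].

Lemma lines_uniq n st : wf_arms (flatten st) -> uniq (lines n st).
Proof.
elim: n st => [//|n IHn] st wf_st /=.
apply: allpairs_cons_uniq => [|p /(moves_next wf_st)[wf_p _]]; last exact: IHn.
exact: moves_fst_uniq wf_st.1.
Qed.

Lemma remaining_moves0_terminal st : remaining_moves st = 0 -> terminal st.
Proof. by move=> rm0 m st' /step_remaining_moves; rewrite rm0. Qed.

Lemma mem_lines n st l : wf_arms (flatten st) -> remaining_moves st = n ->
  l \in lines n st <-> line_from st l.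
Proof.
elim: n st l => [|n IHn] st l wf_st rm_st.
  have term_st := remaining_moves0_terminal rm_st.
  by case: l => [|m l] /=; rewrite inE //; split=> // -[st' [/term_st]].
have next_p p : p \in moves st -> wf_arms (flatten p.2) /\ remaining_moves p.2 = n.
  by move=> /(moves_next wf_st); rewrite rm_st => -[? []].
split.
  case/allpairsPdep=> p [l' [p_in l'_in ->]] /=; have [wf_p rm_p] := next_p p p_in.
  by exists p.2; split; [exact: moves_step wf_st.1 p_in | apply/IHn].
case: l => [|m l] /=.
  have [p p_in] : exists p, p \in moves st.
    move: (moves_nil st); rewrite rm_st.
    by case: (moves st) => [//|p ?] _; exists p; rewrite mem_head.
  by move=> /(_ _ _ (moves_step wf_st.1 p_in)).
case=> st' [step_st line_st']; have [s ms_in eq_s] := step_moves wf_st.1 step_st.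
have [wf_s rm_s] := next_p _ ms_in.
apply/allpairsPdep; exists (m, s), l; split=> //.
by apply/IHn => //; apply: line_from_perm eq_s line_st'.
Qed.

Lemma wf_init n : wf_arms (flatten (init_state n)).
Proof.
rewrite /init_state /= cats0; split; first by rewrite map_inj_uniq ?iota_uniq // => i j [].
by move=> u v _ /mapP[i _ ->].
Qed.

Lemma remaining_moves_init n : remaining_moves (init_state n) = n.-1.
Proof. by rewrite /remaining_moves big_seq1 size_map size_iota. Qed.

(** * Abel's identity *)

Section AbelIdentity.
Local Open Scope ring_scope.
Variable R : numDomainType.

Definition abel_poly (j : nat) (c : R) : {poly R} :=
  if j is j'.+1 then ('X + c%:P) * ('X + (c + j%:R)%:P) ^+ j' else 1.

Lemma deriv_abel_poly j c :
  (abel_poly j.+1 c)^`() = abel_poly j (c + 1) *+ j.+1.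
Proof.
case: j => [|j]; first by rewrite /= expr0 mulr1 derivD derivX derivC addr0.
rewrite /abel_poly derivM deriv_exp !derivD derivX !derivC !addr0 mul1r /=.
rewrite -addrA nat1r exprS; move: (_ ^+ j) => W.
rewrite mul1r -[W *+ _]mulr_natr -[(_ * W) *+ _]mulr_natr.
by rewrite (polyCD c j.+2%:R) polyC_natr polyCD polyC1; ring.
Qed.

Lemma deriv_eq0_polyC (p : {poly R}) : p^`() = 0 -> p = (p`_0)%:P.
Proof.
move=> p'0; apply/polyP => -[|i]; rewrite coefC //=.
have /eqP : (p^`())`_i = 0 by rewrite p'0 coef0.
by rewrite coef_deriv -mulr_natr mulf_eq0 pnatr_eq0 orbF => /eqP.
Qed.

(* Abel's identity sum_j C(m,j) x (x+j)^(j-1) (y+m-j)^(m-j) = (x+y+m)^m at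
   x = 'X + c: by induction on m, both sides have the same derivative, and
   they agree at 'X = -c. *)
Lemma abel_identity m c y :
  \sum_(j < m.+1) abel_poly j c * ('C(m, j)%:R * (y + (m - j)%:R) ^+ (m - j))%:P
  = ('X + (c + y + m%:R)%:P) ^+ m.
Proof.
elim: m c => [|m IHm] c.
  by rewrite big_ord_recl big_ord0 addr0 bin0 subn0 !expr0 mulr1 mul1r.
apply/eqP; rewrite -subr_eq0; set D := (_ - _); apply/eqP.
have D'0 : D^`() = 0.
  rewrite derivB (big_morph _ (@derivD _) (@deriv0 _)) big_ord_recl.
  rewrite [abel_poly _ c]/= mul1r derivC add0r deriv_exp derivD derivX derivC addr0 mul1r.
  have -> : c + y + m.+1%:R = (c + 1) + y + m%:R by rewrite -nat1r; ring.
  rewrite -(IHm (c + 1)) -mulr_natl mulr_sumr; apply/eqP; rewrite subr_eq0.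
  apply/eqP/eq_bigr => i _.
  rewrite derivM derivC mulr0 addr0 lift0 deriv_abel_poly subSS.
  rewrite -[abel_poly _ _ *+ _]mulr_natl -mulrA [LHS]mulrCA [RHS]mulrCA.
  congr (_ * _); rewrite -!polyC_natr -!polyCM !mulrA -!natrM.
  by rewrite -mul_bin_diag.
rewrite (deriv_eq0_polyC D'0) -[RHS]polyC0; congr (_%:P).
rewrite -(hornerC D`_0 (- c)) -(deriv_eq0_polyC D'0) /D.
rewrite hornerE horner_sum big_ord_recl big1 => [|i _]; last first.
  by rewrite lift0 /abel_poly !hornerE /= addNr !mul0r.
by rewrite /= !hornerE subn0 /= addNr add0r subrr.
Qed.

End AbelIdentity.

Lemma abel_identity_nat m :
  \sum_(j < m.+1) j.+1 ^ j.-1 * 'C(m, j) * (m - j) ^ (m - j) = m.+1 ^ m.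
Proof.
apply/eqP; rewrite -(eqr_nat int) natr_sum.
have := congr1 (horner^~ 1%R) (@abel_identity int m 0%R 0%R).
rewrite horner_sum !hornerE /= !addr0 nat1r -natrX => <-.
apply/eqP/eq_bigr => j _; rewrite hornerM hornerC add0r !natrM !natrX mulrA.
congr (_ * _ * _)%R; case: (nat_of_ord j) => [|k]; rewrite /abel_poly !hornerE //=.
Qed.

Lemma abel_identity_nat_ltn m :
  \sum_(j < m) j.+1 ^ j.-1 * 'C(m, j) * (m - j) ^ (m - j) = m * m.+1 ^ m.-1.
Proof.
have := abel_identity_nat m; rewrite big_ord_recr /= subnn binn expn0 !muln1 => sum_m.
apply/eqP; rewrite -(eqn_add2r (m.+1 ^ m.-1)) sum_m -mulSnr.
by case: m {sum_m} => [|m] //=; rewrite expnS.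
Qed.

(** * Counting lines of play *)

Section Counting.
Local Open Scope ring_scope.

Lemma sum_pairs_diff (V : nmodType) m (f : nat -> V) :
  \sum_(0 <= i < m.+1) \sum_(i.+1 <= j < m.+1) f (j - i)%N = \sum_(d < m) f d.+1 *+ (m - d).
Proof.
elim: m => [|m IHm]; first by rewrite big_nat1 big_geq // big_ord0.
rewrite big_nat_recl // big_add1 /= big_mkord.
rewrite (eq_bigr (fun i => \sum_(i.+1 <= j < m.+1) f (j - i)%N)) => [|i _]; last first.
  by rewrite big_add1.
rewrite IHm !big_ord_recr /= subn0 subSnn mulr1n addrAC -big_split /=.
by congr (_ + _); apply: eq_bigr => d _; rewrite subn0 subSn 1?ltnW // mulrS.
Qed.

Definition region_weight (k : nat) : rat := (k ^ k.-1)%:R / k`!%:R.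

Lemma natr_fact_neq0 (R : numDomainType) n : n`!%:R != 0 :> R.
Proof. by rewrite pnatr_eq0 -lt0n fact_gt0. Qed.

Lemma region_weightS k : region_weight k.+1 = (k.+1 ^ k.-1)%:R / k`!%:R.
Proof.
rewrite /region_weight factS natrM -[X in X%:R](_ : k.+1 * k.+1 ^ k.-1 = _)%N.
  by rewrite natrM -mulf_div divff ?mul1r // pnatr_eq0.
by case: k => [|k]; rewrite ?expnS.
Qed.

Lemma region_weight_convolution_term m d : (d < m)%N ->
  (region_weight d.+1 * region_weight (m - d)) *+ (m - d)
  = (d.+1 ^ d.-1 * 'C(m, d) * (m - d) ^ (m - d))%:R / m`!%:R.
Proof.
move=> lt_dm; have [e ->] : exists e, m = (d + e.+1)%N by exists (m - d.+1)%N; lia.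
rewrite addKn -(bin_fact (leq_addr e.+1 d)) addKn region_weightS /region_weight.
rewrite expnS factS !natrM -[_ *+ e.+1]mulr_natr; field.
by rewrite nat1r !natr_fact_neq0 !pnatr_eq0 -!lt0n bin_gt0 leq_addr.
Qed.

Lemma region_weight_convolution m :
  \sum_(d < m) (region_weight d.+1 * region_weight (m - d)) *+ (m - d)
  = region_weight m.+1 *+ m.
Proof.
rewrite (eq_bigr _ (fun d _ => region_weight_convolution_term (ltn_ord d))) -mulr_suml.
rewrite -natr_sum abel_identity_nat_ltn region_weightS natrM -mulr_natl; field.
exact: natr_fact_neq0.
Qed.

Definition state_weight (st : state) : rat := \prod_(r <- st) region_weight (size r).

Definition line_count (st : state) : rat := (remaining_moves st)`!%:R * state_weight st.

Lemma state_weight_cat s t : state_weight (s ++ t) = state_weight s * state_weight t.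
Proof. exact: big_cat. Qed.

Lemma state_weight_cons r st :
  state_weight (r :: st) = region_weight (size r) * state_weight st.
Proof. exact: big_cons. Qed.

Lemma region_moves_weight r :
  \sum_(p <- region_moves r) state_weight p.2 = region_weight (size r) *+ (size r).-1.
Proof.
rewrite big_allpairs_dep.
pose f k d := region_weight d * region_weight (k - d).
rewrite (eq_big_seq (fun i => \sum_(i.+1 <= j < size r) f (size r) (j - i)%N))
  => [|i _]; last first.
  apply: eq_big_seq => j; rewrite mem_index_iota => /andP[lt_ij lt_jr].
  rewrite !state_weight_cons /state_weight big_nil mulr1 /f /= size_cat size_drop.
  rewrite !size_takel ?size_drop; [congr (region_weight _ * region_weight _); lia|lia|lia].
case: (size r) => [|m]; first by rewrite big_geq.
rewrite sum_pairs_diff -region_weight_convolution; apply: eq_bigr => d _.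
by rewrite /f subSS.
Qed.

Lemma moves_weight st :
  \sum_(p <- moves st) state_weight p.2 = state_weight st *+ remaining_moves st.
Proof.
elim: st => [|r st IHst] /=; first by rewrite big_nil /remaining_moves big_nil.
rewrite big_cat !big_map /=.
under eq_bigr do rewrite state_weight_cat.
under [X in _ + X]eq_bigr do rewrite state_weight_cons.
rewrite -mulr_suml -mulr_sumr region_moves_weight IHst state_weight_cons.
by rewrite /remaining_moves big_cons mulrnDr mulrnAl mulrnAr.
Qed.

Lemma state_weight_terminal st : remaining_moves st = 0 -> state_weight st = 1.
Proof.
elim: st => [|r st IHst]; first by rewrite /state_weight big_nil.
rewrite state_weight_cons /remaining_moves big_cons => /eqP; rewrite addn_eq0.
case/andP=> /eqP size_r /eqP/IHst->; rewrite mulr1.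
by case: r size_r => [|x [|y r]].
Qed.

Lemma size_lines n st : wf_arms (flatten st) -> remaining_moves st = n ->
  (size (lines n st))%:R = line_count st.
Proof.
elim: n st => [|n IHn] st wf_st rm_st.
  by rewrite /line_count rm_st state_weight_terminal // mulr1.
rewrite /= size_allpairs_dep sumnE natr_sum big_map.
rewrite (eq_big_seq (fun p => n`!%:R * state_weight p.2)) => [|p p_in]; last first.
  have [wf_p rm_p] := moves_next wf_st p_in.
  by rewrite IHn // /line_count; move: rm_p; rewrite rm_st => -[->].
rewrite -mulr_sumr moves_weight /line_count rm_st factS natrM.
by rewrite -[_ *+ n.+1]mulr_natl mulrCA mulrA.
Qed.

Lemma line_count_init n : line_count (init_state n) = (n ^ (n - 2))%:R.
Proof.
rewrite /line_count remaining_moves_init /state_weight big_seq1 size_map size_iota.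
case: n => [|k]; first by rewrite /region_weight.
by rewrite region_weightS /= mulrC divfK ?natr_fact_neq0 // subSS subn1.
Qed.

End Counting.

Theorem theorem3 (n : nat) : 1 <= n ->
  exists s : seq (seq {fset label}),
    [/\ uniq s,
        (forall l, l \in s <-> complete_line n l) &
        size s = n ^ (n - 2)].
Proof.
(* The count is right for n = 0 as well. *)
move=> _; exists (lines n.-1 (init_state n)); split.
- exact: lines_uniq (wf_init n).
- by move=> l; apply: mem_lines (wf_init n) (remaining_moves_init n).
- apply/eqP; rewrite -(eqr_nat rat) (size_lines (wf_init n) (remaining_moves_init n)).
  by rewrite line_count_init.
Qed.
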